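(* Let $X$ be a topological space and let $\mathcal C=\mathcal C(\mathcal A)$ be the epireflective subcategory of $\mathbf{Top}$ generated by a family of spaces $\mathcal A$. For a subset $A$ of $X$ the following are equivalent: (a) $A$ is $\mathcal C$-open (resp. $\mathcal C$-closed); (b) $A=\mathrm{r}_{(X,\mathcal C)}^{-1}(U)$ for some open (resp. closed) subset $U$ of $\mathrm{r}_{\mathcal C}X$; (c) $A$ is $\mathcal A$-open (resp. $\mathcal A$-closed).
   Context: $\mathcal C(\mathcal A)$ is the class of spaces homeomorphic to subspaces of products of spaces in $\mathcal A$; it is epireflective: each space $X$ has a reflection $\mathrm{r}_{\mathcal C}X\in\mathcal C$ with a continuous surjection $\mathrm{r}_{(X,\mathcal C)}\colon X\to\mathrm{r}_{\mathcal C}X$ through which every continuous map from $X$ into a space of $\mathcal C$ factors uniquely. For a class $\mathcal B$ of spaces, a subset of $X$ is a $\mathcal B$-oset if it equals $f^{-1}(U)$ for some continuous $f\colon X\to Y$ with $Y\in\mathcal B$ and $U$ open in $Y$; the members of the topology generated by the $\mathcal B$-osets (as a subbase) are the $\mathcal B$-open sets, and complements of $\mathcal B$-open sets are $\mathcal B$-closed. *)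

From HB Require Import structures.
From mathcomp Require Import all_boot all_order all_algebra.
From mathcomp Require Import all_classical all_reals all_analysis.
Set Implicit Arguments. Unset Strict Implicit. Unset Printing Implicit Defensive.
Local Open Scope classical_set_scope.

Definition space_class := topologicalType -> Prop.

(* e : X -> Y is a homeomorphism of X onto the subspace e(X) of Y:
   injective, continuous, and every open set of X is the trace (preimage)
   of an open set of Y. *)
Definition embedding (X Y : topologicalType) (e : X -> Y) : Prop :=
  injective e /\ continuous e /\
  (forall U : set X, open U -> exists V : set Y, open V /\ U = e @^-1` V).

(* C(A): spaces homeomorphic to subspaces of products of spaces in A. *)
Definition gen_class (A : space_class) : space_class := fun X =>
  exists (I : Type) (T : I -> topologicalType) (e : X -> prod_topology T),
    (forall i, A (T i)) /\ embedding e.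

Definition is_reflection (C : space_class) (X Y : topologicalType)
    (r : X -> Y) : Prop :=
  C Y /\ continuous r /\ (forall y : Y, exists x : X, r x = y) /\
  forall (Z : topologicalType), C Z -> forall f : X -> Z, continuous f ->
    exists g : Y -> Z, continuous g /\ g \o r = f /\
      forall g' : Y -> Z, continuous g' -> g' \o r = f -> g' = g.

Definition oset (B : space_class) (X : topologicalType) (S : set X) : Prop :=
  exists (Y : topologicalType) (f : X -> Y) (U : set Y),
    B Y /\ continuous f /\ open U /\ S = f @^-1` U.

Definition is_topology (X : Type) (O : set (set X)) : Prop :=
  O setT /\ (forall U V, O U -> O V -> O (U `&` V)) /\
  (forall G : set (set X), G `<=` O -> O (\bigcup_(U in G) U)).

Definition generated_open (X : Type) (Sb : set (set X)) (S : set X) : Prop :=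
  forall O : set (set X), is_topology O -> Sb `<=` O -> O S.

Definition B_open (B : space_class) (X : topologicalType) (S : set X) : Prop :=
  generated_open (@oset B X) S.

Definition B_closed (B : space_class) (X : topologicalType) (S : set X) : Prop :=
  B_open B (~` S).

From HB Require Import structures.
From mathcomp Require Import all_boot all_order all_algebra.
From mathcomp Require Import all_classical all_reals all_analysis.
From mathcomp Require Import finmap.
Set Implicit Arguments.
Unset Strict Implicit.
Unset Printing Implicit Defensive.
Local Open Scope classical_set_scope.

(* The C(A)-osets of X are exactly the preimages under r of the open sets of
   r_C X: a map into a space of C(A) factors through r, and r_C X itself lies
   in C(A).  These preimages already form a topology, so they are also the
   C(A)-open sets.  An A-oset is a C(A)-oset because every space embeds in its
   power indexed by a point; conversely, if e embeds Z into a product of spaces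
   of A, a C(A)-oset f^-1(V) is the preimage under e o f of an open set of the
   product, i.e. a union of finite intersections of preimages of open sets
   under the coordinates of e o f, which are A-osets.  Closed sets follow by
   complementation. *)

Section topology_closure.
Variables (T : Type) (O : set (set T)).
Hypothesis topO : is_topology O.

Lemma is_topology_bigcup (I : Type) (P : set I) (F : I -> set T) :
  (forall i, P i -> O (F i)) -> O (\bigcup_(i in P) F i).
Proof.
move=> OF; have [_ [_ OU]] := topO; rewrite -(bigcup_image P F id).
by apply: OU => _ [i Pi <-]; exact: OF.
Qed.

Lemma is_topology_bigcap_fset (I : choiceType) (D : {fset I}) (F : I -> set T) :
  (forall i, i \in D -> O (F i)) -> O (\bigcap_(i in [set` D]) F i).
Proof.
move=> OF; have [OT [OI _]] := topO.
by rewrite bigcap_fset big_seq; apply: big_ind.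
Qed.

End topology_closure.

Section generated_topology.
Variable T : Type.

Lemma generated_open_is_topology (Sb : set (set T)) :
  is_topology (generated_open Sb).
Proof.
split; first by move=> O [].
split; first by move=> U V GU GV O topO sbO; apply: topO.2.1; [exact: GU|exact: GV].
by move=> G GO O topO sbO; apply: topO.2.2 => U /GO; apply.
Qed.

Lemma sub_generated_open (Sb : set (set T)) : Sb `<=` generated_open Sb.
Proof. by move=> U SbU O _; apply. Qed.

Lemma generated_open_sub (Sb O : set (set T)) :
  is_topology O -> Sb `<=` O -> generated_open Sb `<=` O.
Proof. by move=> topO sbO U; apply. Qed.

Lemma generated_open_id (O : set (set T)) : is_topology O -> generated_open O = O.
Proof.
by move=> topO; apply/seteqP; split; [exact: generated_open_sub|exact: sub_generated_open].
Qed.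

End generated_topology.

Lemma open_is_topology (T : topologicalType) : is_topology (@open T).
Proof.
split; first exact: openT.
by split; [exact: openI|move=> G GO; exact: bigcup_open].
Qed.

Lemma preimage_open_is_topology (T : Type) (U : topologicalType) (f : T -> U) :
  is_topology [set f @^-1` V | V in open].
Proof.
split; first by exists setT; [exact: openT|exact: preimage_setT].
split.
  by move=> _ _ [V oV <-] [W oW <-]; exists (V `&` W); [exact: openI|exact: preimage_setI].
move=> G GO; exists (\bigcup_(V in [set V | open V /\ G (f @^-1` V)]) V).
  by apply: bigcup_open => V [].
rewrite preimage_bigcup; apply/seteqP; split => x.
  by move=> [V [_ GV] fxV]; exists (f @^-1` V).
move=> [W GW Wx]; have [V oV fVW] := GO _ GW.
by exists V; [split; rewrite ?fVW|rewrite /preimage /= -fVW in Wx].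
Qed.

Section product_topology.
Variables (I : Type) (T : I -> topologicalType).

Lemma open_cylinder (i : I) (U : set (T i)) :
  open U -> @open (prod_topology T) ((fun f : prod_topology T => f i) @^-1` U).
Proof.
move=> oU; exists [set (fun f : prod_topology T => f i) @^-1` U]; last exact: bigcup_set1.
by move=> _ ->; apply: finI_from1; exists i => //; exists U.
Qed.

Lemma preimage_prod_open (X : Type) (O : set (set X)) (g : X -> prod_topology T) :
  is_topology O ->
  (forall i (U : set (T i)), open U -> O ((fun x => g x i) @^-1` U)) ->
  forall W : set (prod_topology T), open W -> O (g @^-1` W).
Proof.
move=> topO Ocyl W [D DW <-]; rewrite preimage_bigcup.
apply: is_topology_bigcup => // B /DW [F Fsub <-]; rewrite preimage_bigcap.
by apply: is_topology_bigcap_fset => // C /Fsub /set_mem [i _ [U oU <-]]; exact: Ocyl.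
Qed.

End product_topology.

Lemma embedding_unit_prod (Z : topologicalType) :
  embedding (fun z : Z => (fun _ : unit => z) : prod_topology (fun _ : unit => Z)).
Proof.
split; first by move=> x y /(congr1 (fun f => f tt)).
split.
  apply/continuousP => W; exact: preimage_prod_open (open_is_topology Z) _ W.
by move=> U oU; exists ((fun f : prod_topology (fun _ : unit => Z) => f tt) @^-1` U);
  split => //; exact: open_cylinder.
Qed.

Lemma sub_gen_class (A : space_class) (Z : topologicalType) : A Z -> gen_class A Z.
Proof.
by move=> AZ; exists unit, (fun _ => Z), (fun z _ => z); split; last exact: embedding_unit_prod.
Qed.

Section osets.
Variables (A : space_class) (X : topologicalType).

Lemma oset_gen_class_B_open : @oset (gen_class A) X `<=` @B_open A X.
Proof.
move=> _ [Z [f [V [[I [T [e [AT [_ [ce eopen]]]]]] [cf [oV ->]]]]]].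
have [W [oW ->]] := eopen V oV; rewrite -comp_preimage.
apply: (preimage_prod_open (generated_open_is_topology _) _ oW) => i U oU.
apply: sub_generated_open; exists (T i), (fun x => e (f x) i), U; do 2!split => //.
move/continuousP: cf => cf; move/continuousP: ce => ce.
by apply/continuousP => U' oU'; exact: cf _ (ce _ (open_cylinder oU')).
Qed.

Lemma B_open_gen_class : @B_open (gen_class A) X = @B_open A X.
Proof.
apply/seteqP; split; apply: generated_open_sub (generated_open_is_topology _) _.
  by move=> S /oset_gen_class_B_open.
move=> S [Z [f [V [AZ fV]]]]; apply: sub_generated_open.
by exists Z, f, V; split; first exact: sub_gen_class.
Qed.

End osets.

Section reflection.
Variables (C : space_class) (X Y : topologicalType) (r : X -> Y).
Hypothesis reflr : is_reflection C r.

Lemma oset_reflectionE : @oset C X = [set r @^-1` U | U in open].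
Proof.
have [CY [cr [_ factor]]] := reflr.
apply/seteqP; split => [_ [Z [f [V [CZ [cf [oV ->]]]]]]|_ [U oU <-]].
  have [g [cg [<- _]]] := factor Z CZ f cf.
  by exists (g @^-1` V) => //; exact: (continuousP _).1 cg _ oV.
by exists Y, r, U.
Qed.

Lemma B_open_reflection (S : set X) :
  B_open C S <-> exists U : set Y, open U /\ S = r @^-1` U.
Proof.
rewrite /B_open oset_reflectionE generated_open_id; last exact: preimage_open_is_topology.
by split=> [[U oU <-]|[U [oU ->]]]; exists U.
Qed.

Lemma B_closed_reflection (S : set X) :
  B_closed C S <-> exists U : set Y, closed U /\ S = r @^-1` U.
Proof.
rewrite /B_closed B_open_reflection; split=> [[U [oU rUE]]|[U [cU ->]]].
  by exists (~` U); split; [exact: open_closedC|rewrite -preimage_setC -rUE setCK].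
by exists (~` U); split; [exact: closed_openC|rewrite preimage_setC].
Qed.

End reflection.

Theorem lemma5p3 (A : space_class) (X Y : topologicalType) (r : X -> Y)
  (hr : is_reflection (gen_class A) r) (S : set X) :
  ((B_open (gen_class A) S <-> exists U : set Y, open U /\ S = r @^-1` U) /\
   (B_open (gen_class A) S <-> B_open A S)) /\
  ((B_closed (gen_class A) S <-> exists U : set Y, closed U /\ S = r @^-1` U) /\
   (B_closed (gen_class A) S <-> B_closed A S)).
Proof.
split; split.
- exact: B_open_reflection.
- by rewrite B_open_gen_class.
- exact: B_closed_reflection.
- by rewrite /B_closed B_open_gen_class.
Qed.
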